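(* Let $d\ge1$ and $\alpha>1$. For every $\zeta>0$ there exist $\theta>0$ and $N=N(\theta)\in\mathbb{N}$ such that for every $n>N$, every $s\in\{1,\dots,n\}$, every $n$-path $\gamma$ and every configuration $\omega'\subset\mathbb{N}\times\mathbb{R}^d$ having the $\theta$-property (with respect to $n$), at least one of the following holds: (i) $\max\{\Delta\gamma(s),\Delta\gamma(s+1)\}\le n^{\zeta}$; (ii) there exist an $n$-path $\gamma'$ and an integer $k>0$ such that $\gamma(i)=\gamma'(i)$ for all $i\notin[s,s+k-1]$, $(i,\gamma'(i))\in\omega'$ for all $i\in[s,s+k-1]$, and \[T_n(\gamma')+(k+1)n^{\theta}\le T_n(\gamma).\]
   Context: An $n$-path is a map $\gamma:\{1,\dots,n\}\to\mathbb{R}^d$; we write $\gamma(k)$ for its $k$-th point and use the convention $\gamma(0)=0$. For $x\in\mathbb{R}^d$, $|x|_1=\sum_i|x_i|$, and $\Delta\gamma(k)=|\gamma(k)-\gamma(k-1)|_1$. The passage time of an $n$-path is $T_n(\gamma)=\sum_{i=1}^n\Delta\gamma(i)^\alpha$. A configuration $\omega\subset\mathbb{N}\times\mathbb{R}^d$ has the $\theta$-property (for given $n$) if $\omega\cap(\{i\}\times(x+[0,n^\theta)^d))\neq\emptyset$ for every $i\in\mathbb{N}$ and every $x\in\mathbb{Z}^d$. *)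

From HB Require Import structures.
From mathcomp Require Import all_boot all_order all_algebra.
From mathcomp Require Import all_classical all_reals all_analysis.
Set Implicit Arguments. Unset Strict Implicit. Unset Printing Implicit Defensive.
Import Order.TTheory GRing.Theory Num.Theory.
Local Open Scope ring_scope.

Definition pt (R : realType) (d : nat) := 'I_d -> R.

(* An n-path is modelled as gamma : nat -> pt R d; only the values at
   1..n are meaningful, and the convention gamma(0) = 0 is imposed by [gpt]. *)
Definition gpt (R : realType) (d : nat) (gamma : nat -> pt R d) (i : nat) : pt R d :=
  if i == 0%N then (fun _ => 0) else gamma i.

Definition norm1 (R : realType) (d : nat) (x : pt R d) : R := \sum_(j < d) `|x j|.

(* Delta gamma(i) = |gamma(i) - gamma(i-1)|_1 for 1 <= i <= n; 0 outside
   (in particular Delta gamma(n+1) = 0: the path has no step after time n). *)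
Definition Delta (R : realType) (d n : nat) (gamma : nat -> pt R d) (i : nat) : R :=
  if (i == 0%N) || (n < i)%N then 0
  else norm1 (fun j => gpt gamma i j - gpt gamma i.-1 j).

Definition Tn (R : realType) (d n : nat) (alpha : R) (gamma : nat -> pt R d) : R :=
  \sum_(1 <= i < n.+1) (Delta n gamma i) `^ alpha.

Definition config (R : realType) (d : nat) := nat -> pt R d -> Prop.

Definition theta_property (R : realType) (d n : nat) (theta : R) (omega : config R d) : Prop :=
  forall (i : nat), (1 <= i)%N ->
  forall x : 'I_d -> int,
  exists y : pt R d, omega i y /\
    forall j : 'I_d, (x j)%:~R <= y j /\ y j < (x j)%:~R + (n%:R) `^ theta.

(* Suppose no admissible rerouting saves (k + 1) n^theta.  Snapping a point to
   the configuration moves it by at most T = n^theta in each coordinate, so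
   replacing the steps s, ..., s + K - 1 by K equal steps between the same
   endpoints costs at most K (mean + 2 d T)^alpha.  That this never saves K T
   means, by strict convexity of x |-> x^alpha, that the mean step length over
   the dyadic windows [s, s + 2^j) drops by a factor of at most 1 - rho per
   doubling, with rho ~ n^(-theta/2), far below 1 / log n.  Hence a step longer
   than T^2 = n^zeta at time s or s + 1 keeps the mean step of order T^2 up to
   time n, and the m = n + 1 - s remaining steps cost at least of order
   m T^(2 alpha); but freezing the path at gamma(s - 1) costs only
   m (2 d T)^alpha + (m + 1) T, which is smaller. *)

From HB Require Import structures.
From mathcomp Require Import all_boot all_order all_algebra.
From mathcomp Require Import all_classical all_reals all_analysis.
From mathcomp Require Import ring lra zify.
Set Implicit Arguments. Unset Strict Implicit. Unset Printing Implicit Defensive.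
Import Order.TTheory GRing.Theory Num.Theory.
Local Open Scope ring_scope.

(** * Convexity of x ^ a *)

Section power_convexity.
Variables (R : realType) (a : R).
Hypothesis a_gt1 : 1 < a.

Let a_gt0 : 0 < a. Proof. exact: lt_trans ltr01 a_gt1. Qed.
Let a1_gt0 : 0 < a - 1. Proof. by rewrite subr_gt0. Qed.

(* Young's inequality for the conjugate exponents a and a / (a - 1). *)
Lemma powR_tangent (x y : R) : 0 <= x -> 0 <= y ->
  a * x `^ (a - 1) * (y - x) <= y `^ a - x `^ a.
Proof.
move=> x0 y0; have a0 := a_gt0; have a10 := a1_gt0.
pose q := a / (a - 1).
have q0 : 0 < q by rewrite divr_gt0.
have conj_aq : a^-1 + q^-1 = 1 by rewrite /q invf_div; field; lra.
have := conjugate_powR y0 (powR_ge0 x (a - 1)) a_gt0 q0 conj_aq.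
rewrite -powRrM (_ : (a - 1) * q = a); last by rewrite /q; field; lra.
rewrite -(mulr_powRB1 x0 a_gt0) => young.
have := ler_wpM2l (ltW a_gt0) young.
set X := x `^ (a - 1); set Y := y `^ a.
have -> : a * (Y / a + x * X / q) = Y + (a - 1) * (x * X) by rewrite /q; field; lra.
lra.
Qed.

Lemma powR_superadditive (x y : R) : 0 <= x -> 0 <= y ->
  x `^ a + y `^ a <= (x + y) `^ a.
Proof.
move=> x0 y0; have xy0 : 0 <= x + y by rewrite addr_ge0.
rewrite -(mulr_powRB1 x0 a_gt0) -(mulr_powRB1 y0 a_gt0) -(mulr_powRB1 xy0 a_gt0).
by rewrite mulrDl lerD // ler_wpM2l // ge0_ler_powR // ?nnegrE ?lerDl ?lerDr // ltW.
Qed.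

Lemma powR1D_ge (y : R) : 0 <= y <= 1 / 2 ->
  1 + (a - 1) * (2 / 3 * y) <= (1 + y) `^ (a - 1).
Proof.
move=> /andP[y0 y1]; have a10 := a1_gt0.
rewrite /powR gt_eqF; last by lra.
apply: le_trans (expR_ge1Dx _); rewrite lerD2l ler_wpM2l ?(ltW a10) //.
have y1D0 : 0 < 1 + y by lra.
have : ln (1 - y / (1 + y)) <= - (y / (1 + y)).
  by apply: le_ln1Dx; rewrite ltrNl opprK ltr_pdivrMr //; lra.
rewrite (_ : 1 - y / (1 + y) = (1 + y)^-1); last by field; lra.
rewrite lnV ?posrE // lerN2 => /(le_trans _); apply.
by rewrite ler_pdivlMr //; nra.
Qed.

(* Four tangent inequalities, at 1 and at 1 +- x/2. *)
Lemma powR_midpoint_gap1 (x : R) : 0 <= x <= 1 ->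
  a * (a - 1) / 6 * x ^+ 2 <= (1 + x) `^ a + (1 - x) `^ a - 2.
Proof.
move=> /andP[x0 x1]; have a0 := a_gt0; have a10 := a1_gt0.
have [y xE] : exists y, x = 2 * y by exists (x / 2); field.
subst x.
have T1 := @powR_tangent (1 + y) (1 + 2 * y) ltac:(lra) ltac:(lra).
have T2 := @powR_tangent (1 - y) (1 - 2 * y) ltac:(lra) ltac:(lra).
have T3 := @powR_tangent 1 (1 + y) ltac:(lra) ltac:(lra).
have T4 := @powR_tangent 1 (1 - y) ltac:(lra) ltac:(lra).
rewrite !powR1 mulr1 in T3 T4.
have A_ge := @powR1D_ge y ltac:(lra).
have B_le : (1 - y) `^ (a - 1) <= 1.
  by rewrite -[leRHS](powRr0 (1 - y)); apply: ger_powR; [apply/andP; split|]; lra.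
have -> : a * (a - 1) / 6 * (2 * y) ^+ 2 = a * y * ((a - 1) * (2 / 3 * y)) by field.
have : a * y * ((a - 1) * (2 / 3 * y)) <= a * y * ((1 + y) `^ (a - 1) - (1 - y) `^ (a - 1)).
  by apply: ler_wpM2l; [rewrite mulr_ge0 //; lra | lra].
move: T1 T2 T3 T4.
rewrite (_ : 1 + 2 * y - (1 + y) = y); last by ring.
rewrite (_ : 1 - 2 * y - (1 - y) = - y); last by ring.
rewrite (_ : 1 + y - 1 = y); last by ring.
rewrite (_ : 1 - y - 1 = - y); last by ring.
set A := (1 + y) `^ (a - 1); set B := (1 - y) `^ (a - 1).
set P := (1 + y) `^ a; set Q := (1 - y) `^ a.
nra.
Qed.

Lemma powR_midpoint_gap (m h : R) : 0 < m -> 0 <= h <= m ->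
  a * (a - 1) / 6 * h ^+ 2 * m `^ (a - 1) <=
  m * ((m + h) `^ a + (m - h) `^ a - 2 * m `^ a).
Proof.
move=> m0 /andP[h0 hm]; have a0 := a_gt0.
have x01 : 0 <= h / m <= 1.
  by rewrite divr_ge0 ?(ltW m0) //= ler_pdivrMr // mul1r.
have /(ler_wpM2l (mulr_ge0 (ltW m0) (powR_ge0 m a))) := @powR_midpoint_gap1 _ x01.
rewrite -(mulr_powRB1 (ltW m0) a0).
have -> : m + h = m * (1 + h / m) by field; rewrite gt_eqF.
have -> : m - h = m * (1 - h / m) by field; rewrite gt_eqF.
rewrite !powRM ?(ltW m0) //; last 2 first.
- by case/andP: x01 => _; rewrite -subr_ge0.
- by case/andP: x01 => ? _; rewrite addr_ge0.
rewrite -(mulr_powRB1 (ltW m0) a0).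
set M := m `^ (a - 1); set P := (1 + h / m) `^ a; set Q := (1 - h / m) `^ a.
have -> : m * (m * M) * (a * (a - 1) / 6 * (h / m) ^+ 2) = a * (a - 1) / 6 * h ^+ 2 * M.
  by field; rewrite gt_eqF.
by have -> : m * (m * M * P + m * M * Q - 2 * (m * M)) = m * (m * M) * (P + Q - 2) by ring.
Qed.

Lemma powR_increment_le (m e : R) : 0 < e <= m ->
  (m + e) `^ a - m `^ a <= a * 2 `^ (a - 1) * e * m `^ (a - 1).
Proof.
move=> /andP[e0 em]; have a0 := a_gt0; have a10 := a1_gt0.
have := @powR_tangent (m + e) m ltac:(lra) ltac:(lra).
have : (m + e) `^ (a - 1) <= 2 `^ (a - 1) * m `^ (a - 1).
  by rewrite -powRM; [apply: ge0_ler_powR; rewrite ?nnegrE|..]; lra.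
rewrite (_ : m - (m + e) = - e); last by ring.
move=> /(ler_wpM2l (mulr_ge0 (ltW a0) (ltW e0))).
rewrite mulrA [_ * e * _]mulrAC; lra.
Qed.

(* Twice the increment constant [a 2^(a-1)] of powR_increment_le over the gap
   constant [a (a - 1) / 6] of powR_midpoint_gap. *)
Definition doubling_const := 12 * 2 `^ (a - 1) / (a - 1).

Lemma doubling_const_gt0 : 0 < doubling_const.
Proof. by rewrite divr_gt0 ?mulr_gt0 ?powR_gt0. Qed.

Lemma mean_ge_of_powR_sum_lt (eps u v rho : R) :
  0 < eps -> 0 <= v -> 0 <= rho -> 4 * eps <= u ->
  doubling_const * eps <= rho ^+ 2 * u ->
  u `^ a + v `^ a < 2 * ((u + v) / 2 + eps) `^ a ->
  u * (1 - rho) <= (u + v) / 2.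
Proof.
move=> e0 v0 r0 ue Cu H; have a0 := a_gt0; have a10 := a1_gt0.
have ur0 : 0 <= rho * u by rewrite mulr_ge0 //; lra.
have [uv|vu] := leP u v; first by lra.
set m := (u + v) / 2 in H *; set h := (u - v) / 2.
have m0 : 0 < m by rewrite /m; lra.
have := @powR_midpoint_gap m h m0 ltac:(rewrite /m /h; apply/andP; split; lra).
have -> : m + h = u by rewrite /m /h; field.
have -> : m - h = v by rewrite /m /h; field.
move=> G.
have I := @powR_increment_le m eps ltac:(rewrite /m; apply/andP; split; lra).
have M0 : 0 < m `^ (a - 1) by rewrite powR_gt0.
have c0 : 0 < a * (a - 1) / 6 by rewrite divr_gt0 ?mulr_gt0.
have h2 : h ^+ 2 < doubling_const * eps * m.
  rewrite -(ltr_pM2l c0) -(ltr_pM2r M0); apply: (le_lt_trans G).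
  have -> : a * (a - 1) / 6 * (doubling_const * eps * m) * m `^ (a - 1) =
            m * (2 * (a * 2 `^ (a - 1) * eps * m `^ (a - 1))).
    by rewrite /doubling_const; field; lra.
  by rewrite ltr_pM2l //; lra.
have h_lt : h < rho * u.
  have h0 : 0 <= h by rewrite /h; lra.
  rewrite -ltr_sqr ?nnegrE //.
  apply: (lt_le_trans h2).
  have Ce0 := mulr_ge0 (ltW doubling_const_gt0) (ltW e0).
  apply: le_trans (_ : doubling_const * eps * u <= _); first by rewrite ler_wpM2l // /m; lra.
  by rewrite exprMn expr2 mulrA ler_wpM2r //; lra.
have -> : m = u - h by rewrite /m /h; field.
lra.
Qed.

End power_convexity.

(** * Dyadic averages *)

Definition avg {R : realType} (c : nat -> R) (K : nat) : R := (\sum_(t < K) c t) / K%:R.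

Definition pow_sum {R : realType} (a : R) (c : nat -> R) (K : nat) : R :=
  \sum_(t < K) c t `^ a.

Section power_sums.
Variables (R : realType) (a : R).
Hypothesis a_gt1 : 1 < a.
Implicit Types (c : nat -> R) (K L : nat).

Lemma avg_ge0 c K : (forall t, 0 <= c t) -> 0 <= avg c K.
Proof. by move=> c0; rewrite divr_ge0 ?sumr_ge0. Qed.

Lemma jensen_powR c K : (forall t, 0 <= c t) -> (0 < K)%N ->
  K%:R * avg c K `^ a <= pow_sum a c K.
Proof.
move=> c0 K0; have mu0 := avg_ge0 K c0.
have : \sum_(t < K) a * avg c K `^ (a - 1) * (c t - avg c K) <=
       \sum_(t < K) (c t `^ a - avg c K `^ a).
  by apply: ler_sum => t _; exact: powR_tangent.
rewrite -mulr_sumr sumrB !sumr_const card_ord.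
have -> : \sum_(t < K) c t - avg c K *+ K = 0.
  by rewrite /avg -[_ / _ *+ K]mulr_natr divfK ?subrr // pnatr_eq0 -lt0n.
by rewrite mulr0 sumrB sumr_const card_ord subr_ge0 mulr_natl.
Qed.

Lemma pow_sum_le c K L : (forall t, 0 <= c t) -> (K <= L)%N ->
  pow_sum a c K <= pow_sum a c L.
Proof.
move=> c0 KL; rewrite /pow_sum (big_ord_widen _ (fun t => c t `^ a) KL) big_mkcond /=.
by apply: ler_sum => t _; case: ifP => // _; rewrite powR_ge0.
Qed.

Lemma avg_double c K : (0 < K)%N ->
  avg c (K + K) = (avg c K + avg (fun t => c (K + t)%N) K) / 2.
Proof.
move=> K0; rewrite /avg big_split_ord natrD /=.
have Kr : K%:R != 0 :> R by rewrite pnatr_eq0 -lt0n.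
by field; rewrite Kr -mulr2n mulrn_eq0 (negPf Kr).
Qed.

Lemma pow_sum_double c K :
  pow_sum a c (K + K) = pow_sum a c K + pow_sum a (fun t => c (K + t)%N) K.
Proof. by rewrite /pow_sum big_split_ord. Qed.

End power_sums.

Section dyadic_averages.
Variables (R : realType) (a : R) (c : nat -> R) (B eps rho : R) (m : nat).
Hypotheses (a_gt1 : 1 < a) (c_ge0 : forall t, 0 <= c t).
Hypotheses (eps_gt0 : 0 < eps) (rho_ge0 : 0 <= rho).
Hypothesis eps_small : 4 * eps <= B / 4.
Hypothesis rho_large : doubling_const a * eps <= rho ^+ 2 * (B / 4).
Hypothesis rho_small : forall j, (2 ^ j <= m)%N -> j%:R * rho <= 1 / 2.
Hypothesis no_gain :
  forall K, (2 <= K <= m)%N -> pow_sum a c K < K%:R * (avg c K + eps) `^ a.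

(* If the window [0, 2K) cannot be shortened, strict convexity forces its two
   halves to have nearly equal averages. *)
Lemma avg_doubling_ge K : (0 < K)%N -> (K + K <= m)%N -> B / 4 <= avg c K ->
  avg c K * (1 - rho) <= avg c (K + K).
Proof.
move=> K0 KKm uB.
have Kr : 0 < K%:R :> R by rewrite ltr0n.
have c'_ge0 : forall t, 0 <= c (K + t)%N by [].
set u := avg c K; set v := avg (fun t => c (K + t)%N) K.
have gain := @no_gain (K + K) ltac:(by rewrite KKm andbT; lia).
rewrite pow_sum_double avg_double // -/u -/v natrD in gain.
have J1 := jensen_powR a_gt1 c_ge0 K0.
have J2 := jensen_powR a_gt1 c'_ge0 K0.
rewrite avg_double //; apply: (mean_ge_of_powR_sum_lt a_gt1 eps_gt0) => //.
- exact: avg_ge0.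
- exact: le_trans eps_small uB.
- exact: le_trans rho_large (ler_wpM2l (sqr_ge0 rho) uB).
set Q := ((u + v) / 2 + eps) `^ a in gain *.
rewrite -(ltr_pM2l Kr) mulrDr; apply: le_lt_trans (lerD J1 J2) _.
by have -> : K%:R * (2 * Q) = (K%:R + K%:R) * Q by ring.
Qed.

Hypothesis head_large : B < c 0%N \/ (1 < m)%N /\ B < c 1%N.

Lemma dyadic_avg_ge j : (0 < j)%N -> (2 ^ j <= m)%N ->
  B / 2 * (1 - j.-1%:R * rho) <= avg c (2 ^ j).
Proof.
have B0 : 0 < B by have := eps_small; have := eps_gt0; lra.
elim: j => // -[_ _ _ | j IH _ hjm].
  rewrite mul0r subr0 mulr1 /avg !big_ord_recr big_ord0 /= add0r.
  have := c_ge0 0; have := c_ge0 1.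
  case: head_large => [|[_]] hB; lra.
have hjm' : (2 ^ j.+1 <= m)%N by apply: leq_trans hjm; rewrite leq_exp2l.
have := IH isT hjm'; set K := (2 ^ j.+1)%N => IHj.
have K0 : (0 < K)%N by rewrite expn_gt0.
rewrite (_ : (2 ^ j.+2)%N = (K + K)%N) in hjm *; last by rewrite expnS mul2n addnn.
have jr : j%:R * rho <= 1 / 2.
  apply: le_trans (rho_small hjm'); rewrite ler_wpM2r // ler_nat //.
have uB : B / 4 <= avg c K by apply: le_trans IHj; nra.
have r1 : rho <= 1 / 2.
  have two_le_m : (2 ^ 1 <= m)%N by apply: leq_trans hjm'; rewrite leq_exp2l.
  by have := rho_small two_le_m; lra.
apply: le_trans (avg_doubling_ge K0 hjm uB).
have r1' : 0 <= 1 - rho by lra.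
apply: le_trans (ler_wpM2r r1' IHj).
have := mulr_ge0 (ltW B0) (mulr_ge0 (ler0n R j) (sqr_ge0 rho)).
rewrite /= -[j.+1]addn1 natrD; lra.
Qed.

Lemma pow_sum_ge_of_large_head : (0 < m)%N -> m%:R / 2 * (B / 4) `^ a <= pow_sum a c m.
Proof.
move=> m0; have B0 : 0 < B by have := eps_small; have := eps_gt0; lra.
have a0 : 0 <= a by apply: ltW; apply: lt_trans a_gt1.
have [m_le1|m_gt1] := leqP m 1.
  case: head_large => [hB|[m_gt1]]; last by rewrite ltnNge m_le1 in m_gt1.
  have -> : m = 1%N by lia.
  rewrite /pow_sum big_ord1.
  have : (B / 4) `^ a <= c 0%N `^ a by apply: ge0_ler_powR; rewrite ?nnegrE //; lra.
  have := powR_ge0 (B / 4) a; lra.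
set J := trunc_log 2 m.
have /andP[hJ1 hJ2] := trunc_log_bounds (isT : (1 < 2)%N) m0.
have J0 : (0 < J)%N by rewrite trunc_log_gt0.
set K := (2 ^ J)%N in hJ1 hJ2.
have K0 : (0 < K)%N by rewrite expn_gt0.
have jr : J.-1%:R * rho <= 1 / 2.
  by apply: le_trans (rho_small hJ1); rewrite ler_wpM2r // ler_nat leq_pred.
have uB : B / 4 <= avg c K by apply: le_trans (dyadic_avg_ge J0 hJ1); nra.
have mK : m%:R / 2 <= K%:R :> R.
  have : (m <= K + K)%N by move: hJ2; rewrite expnS mul2n -addnn => /ltnW.
  by rewrite -(ler_nat R) natrD; lra.
apply: le_trans (pow_sum_le a c_ge0 hJ1).
apply: le_trans (jensen_powR a_gt1 c_ge0 K0).
apply: ler_pM; [by rewrite divr_ge0 | exact: powR_ge0 | exact: mK |].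
by apply: ge0_ler_powR; rewrite ?nnegrE ?avg_ge0 //; lra.
Qed.

End dyadic_averages.

(** * Rerouting paths *)

Definition steps {R : realType} {d : nat} (n : nat) (g : nat -> pt R d) (s t : nat) : R :=
  Delta n g (s + t).

Definition rerouted {R : realType} {d : nat} (n : nat) (om : config R d)
    (g g' : nat -> pt R d) (s k : nat) : Prop :=
  (forall i : nat, (1 <= i <= n)%N -> ~~ (s <= i <= s + k - 1)%N -> g i = g' i) /\
  (forall i : nat, (1 <= i <= n)%N -> (s <= i <= s + k - 1)%N -> om i (g' i)).

Definition snap_map {R : realType} {d : nat} (om : config R d) (T : R)
    (Y : nat -> pt R d -> pt R d) : Prop :=
  forall i w, (1 <= i)%N -> om i (Y i w) /\ forall j, `|Y i w j - w j| <= T.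

Section path_surgery.
Variables (R : realType) (d n : nat).
Implicit Types (g : nat -> pt R d) (T : R).

Lemma norm1_ge0 (x : pt R d) : 0 <= norm1 x.
Proof. exact: sumr_ge0. Qed.

Lemma Delta_ge0 g i : 0 <= Delta n g i.
Proof. by rewrite /Delta; case: ifP => // _; exact: norm1_ge0. Qed.

Lemma steps_ge0 g s t : 0 <= steps n g s t.
Proof. exact: Delta_ge0. Qed.

Lemma Delta_out g i : (n < i)%N -> Delta n g i = 0.
Proof. by move=> ni; rewrite /Delta ni orbT. Qed.

Lemma Delta_in g i : (1 <= i <= n)%N ->
  Delta n g i = norm1 (fun j => gpt g i j - gpt g i.-1 j).
Proof. by move=> hi; rewrite /Delta ifF //; lia. Qed.

Lemma norm1_displacement_le g s K : (1 <= s)%N -> (s + K <= n.+1)%N ->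
  norm1 (fun j => gpt g (s.-1 + K) j - gpt g s.-1 j) <= \sum_(t < K) steps n g s t.
Proof.
move=> s1 sK; rewrite /norm1 /steps.
have tele j : gpt g (s.-1 + K) j - gpt g s.-1 j =
    \sum_(t < K) (gpt g (s + t)%N j - gpt g (s + t).-1 j).
  elim: (K) => [|k IH]; first by rewrite big_ord0 addn0 subrr.
  rewrite big_ord_recr /= -IH (_ : s.-1 + k.+1 = s + k)%N; last by lia.
  by rewrite (_ : (s + k).-1 = s.-1 + k)%N; [ring | lia].
under eq_bigr do rewrite tele.
apply: le_trans (ler_sum _ (fun j _ => ler_norm_sum _ _ _)) _.
rewrite exchange_big /=; apply: ler_sum => t _.
by rewrite Delta_in //; have := ltn_ord t; lia.
Qed.

Lemma big_nat_window (F : nat -> R) s L :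
  \sum_(s <= i < s + L) F i = \sum_(t < L) F (s + t)%N.
Proof.
by rewrite -{1}(add0n s) big_addn addKn big_mkord; apply: eq_bigr => t _; rewrite addnC.
Qed.

Lemma Tn_sub_window alpha g g' s L : (1 <= s)%N -> (s + L <= n.+1)%N ->
  (forall i, ((i < s) || (s + L <= i))%N -> Delta n g' i = Delta n g i) ->
  Tn n alpha g - Tn n alpha g' =
  pow_sum alpha (steps n g s) L - pow_sum alpha (steps n g' s) L.
Proof.
move=> s1 sL same.
rewrite /Tn !(@big_cat_nat _ _ _ s 1 n.+1) ?(@big_cat_nat _ _ _ (s + L) s n.+1) //=;
  try lia.
have -> : \sum_(1 <= i < s) Delta n g' i `^ alpha = \sum_(1 <= i < s) Delta n g i `^ alpha.
  by apply: eq_big_nat => i hi; rewrite same //; lia.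
have -> : \sum_(s + L <= i < n.+1) Delta n g' i `^ alpha =
          \sum_(s + L <= i < n.+1) Delta n g i `^ alpha.
  by apply: eq_big_nat => i hi; rewrite same //; lia.
rewrite !big_nat_window /pow_sum /steps; ring.
Qed.

Lemma Delta_le_of_close g z T i : 0 <= T -> (1 <= i)%N ->
  (forall j, `|gpt g i j - z i j| <= T) -> (forall j, `|gpt g i.-1 j - z i.-1 j| <= T) ->
  Delta n g i <= norm1 (fun j => z i j - z i.-1 j) + d%:R * (2 * T).
Proof.
move=> T0 i1 close_i close_i1.
rewrite /Delta; case: ifP => _; first by rewrite addr_ge0 ?norm1_ge0 ?mulr_ge0.
have -> : d%:R * (2 * T) = \sum_(j < d) 2 * T by rewrite sumr_const card_ord mulr_natl.
rewrite /norm1 -big_split /=.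
apply: ler_sum => j _.
have := close_i j; have := close_i1 j; rewrite distrC.
set x := gpt g i j; set y := gpt g i.-1 j; set x' := z i j; set y' := z i.-1 j.
move=> hy hx; rewrite (_ : x - y = (x' - y') + ((x - x') + (y' - y))); last by ring.
apply: le_trans (ler_normD _ _) _; rewrite lerD2l.
by apply: le_trans (ler_normD _ _) _; lra.
Qed.

End path_surgery.

Lemma theta_property_snap (R : realType) (d n : nat) (th : R) (om : config R d) :
  theta_property n th om -> 1 <= n%:R `^ th ->
  exists Y, snap_map om (n%:R `^ th) Y.
Proof.
move=> hth T1.
have pick (iw : nat * pt R d) : exists y : pt R d,
    (1 <= iw.1)%N -> om iw.1 y /\ forall j, `|y j - iw.2 j| <= n%:R `^ th.
  case: iw => i w /=; have [i1|] := leqP 1 i; last by exists w; lia.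
  have [y [omy box]] := hth i i1 (fun j => Num.floor (w j)).
  exists y => _; split => // j; have [lo hi] := box j.
  have /andP[fl fh] := floor_itv (w j); rewrite intrD in fh.
  by rewrite ler_norml; apply/andP; split; lra.
have [Y HY] := choice pick.
by exists (fun i w => Y (i, w)) => i w i1; exact: HY (i, w) i1.
Qed.

Section rerouting.
Variables (R : realType) (d n : nat) (alpha T : R) (om : config R d).
Variable Y : nat -> pt R d -> pt R d.
Hypotheses (alpha_ge0 : 0 <= alpha) (T_ge0 : 0 <= T) (snapY : snap_map om T Y).
Implicit Types (g z : nat -> pt R d).

(* The points [s .. s + k - 1] are moved to snapped copies of the targets [z];
   only the [L] steps from [s] on can change. *)
Lemma reroute_cost g z s k L : (1 <= s)%N -> (s + L <= n.+1)%N ->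
  ((k < L) || (n < s + L))%N ->
  (forall i, (s.-1 <= i < s + L)%N -> ~~ (s <= i <= s + k - 1)%N -> z i = gpt g i) ->
  exists g', rerouted n om g g' s k /\
    pow_sum alpha (steps n g s) L -
    \sum_(t < L) (norm1 (fun j => z (s + t)%N j - z (s + t).-1 j) + d%:R * (2 * T)) `^ alpha
      <= Tn n alpha g - Tn n alpha g'.
Proof.
move=> s1 sL kL zE.
pose inside i := (s <= i <= s + k - 1)%N.
pose g' i := if inside i then Y i (z i) else g i.
have gpt_out i : ~~ inside i -> gpt g' i = gpt g i by rewrite /gpt /g' => /negbTE ->.
exists g'; split; first split.
- by move=> i _ /negbTE hi; rewrite /g' /inside hi.
- by move=> i /andP[i1 _] hi; rewrite /g' /inside hi; case: (snapY (z i) i1).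
have same i : ((i < s) || (s + L <= i))%N -> Delta n g' i = Delta n g i.
  move=> hi; have [iN|ni] := leqP i n; last by rewrite !Delta_out.
  by rewrite /Delta !gpt_out //; apply/negP; rewrite /inside; lia.
rewrite (Tn_sub_window _ s1 sL same) lerD2l lerN2 /pow_sum.
apply: ler_sum => t _; have ht := ltn_ord t.
have close i : (s.-1 <= i < s + L)%N -> forall j, `|gpt g' i j - z i j| <= T.
  move=> hi j; have [ins|out] := boolP (inside i).
    rewrite /gpt ifF; last by move: ins; rewrite /inside; lia.
    by rewrite /g' ins; case: (snapY (z i) (_ : 1 <= i)%N) => //; move: ins; rewrite /inside; lia.
  by rewrite gpt_out // zE // subrr normr0.
apply: ge0_ler_powR; rewrite ?nnegrE ?steps_ge0 ?addr_ge0 ?norm1_ge0 ?mulr_ge0 //.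
by apply: Delta_le_of_close => //; [lia | apply: close; lia..].
Qed.

(* Straight-line interpolation between the fixed endpoints [s - 1] and [s - 1 + K]. *)
Lemma window_reroute g s K : (1 <= s)%N -> (2 <= K)%N -> (s + K <= n.+1)%N ->
  exists g', rerouted n om g g' s K.-1 /\
    pow_sum alpha (steps n g s) K - K%:R * (avg (steps n g s) K + d%:R * (2 * T)) `^ alpha
      <= Tn n alpha g - Tn n alpha g'.
Proof.
move=> s1 K2 sK; have K0 : 0 < K%:R :> R by rewrite ltr0n; lia.
pose P := gpt g s.-1; pose Q := gpt g (s.-1 + K).
pose z i j := P j + (i%:R - s.-1%:R) / K%:R * (Q j - P j).
have zE i : (s.-1 <= i < s + K)%N -> ~~ (s <= i <= s + K.-1 - 1)%N -> z i = gpt g i.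
  move=> hi1 hi2; apply/funext => j; rewrite /z.
  have [->|->] : i = s.-1 \/ i = (s.-1 + K)%N by lia.
    by rewrite subrr mul0r mul0r addr0.
  by rewrite natrD addrAC subrr add0r divff ?gt_eqF // mul1r /P /Q; ring.
have [g' [rer cost]] := reroute_cost s1 sK (ltac:(lia) : ((K.-1 < K) || (n < s + K))%N) zE.
exists g'; split => //; apply: le_trans cost; rewrite lerD2l lerN2.
set X := avg (steps n g s) K + d%:R * (2 * T).
have -> : K%:R * X `^ alpha = \sum_(t < K) X `^ alpha by rewrite sumr_const card_ord mulr_natl.
apply: ler_sum => t _; have ht := ltn_ord t.
have X0 : 0 <= X by rewrite addr_ge0 ?avg_ge0 ?mulr_ge0 // => t'; exact: steps_ge0.
apply: ge0_ler_powR => //; rewrite ?nnegrE ?(addr_ge0 (norm1_ge0 _)) ?mulr_ge0 // lerD2r.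
have stepE j : z (s + t)%N j - z (s + t).-1 j = (Q j - P j) / K%:R.
  have E1 : ((s + t).-1 = s.-1 + t)%N by lia.
  have E2 : (s + t = (s.-1 + t).+1)%N by lia.
  by rewrite /z E1 E2 -addn1 !natrD; field; rewrite gt_eqF.
have Kinv : 0 < K%:R^-1 :> R by rewrite invr_gt0.
rewrite /norm1; under eq_bigr do rewrite stepE normrM (gtr0_norm Kinv).
rewrite -mulr_suml ler_pM2r ?invr_gt0 //.
exact: norm1_displacement_le.
Qed.

(* The new path stays at its position at time [s - 1]. *)
Lemma tail_reroute g s : (1 <= s <= n)%N ->
  exists g', rerouted n om g g' s (n.+1 - s) /\
    pow_sum alpha (steps n g s) (n.+1 - s) - (n.+1 - s)%:R * (d%:R * (2 * T)) `^ alpha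
      <= Tn n alpha g - Tn n alpha g'.
Proof.
move=> /andP[s1 sn]; pose z (i : nat) := gpt g s.-1.
have zE i : (s.-1 <= i < s + (n.+1 - s))%N -> ~~ (s <= i <= s + (n.+1 - s) - 1)%N ->
    z i = gpt g i.
  by move=> hi1 hi2; have -> : i = s.-1 by lia.
have sL : (s + (n.+1 - s) <= n.+1)%N by lia.
have kL : ((n.+1 - s < n.+1 - s) || (n < s + (n.+1 - s)))%N by lia.
have [g' [rer cost]] := reroute_cost s1 sL kL zE.
exists g'; split => //; apply: le_trans cost; rewrite lerD2l lerN2.
set c := (d%:R * (2 * T)) `^ alpha.
have -> : (n.+1 - s)%:R * c = \sum_(t < n.+1 - s) c by rewrite sumr_const card_ord mulr_natl.
by apply: ler_sum => t _; rewrite /norm1 big1 ?add0r // => j _; rewrite subrr normr0.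
Qed.

End rerouting.

(** * Paths without a shortcut *)

Lemma tail_cost_le (R : realType) (a D T : R) (m : nat) :
  1 < a -> 0 <= D -> 16 * (2 * D + 1) <= T -> (0 < m)%N ->
  m%:R * (D * (2 * T)) `^ a + m.+1%:R * T <= m%:R / 2 * (T ^+ 2 / 4) `^ a.
Proof.
move=> a1 D0 T_large m0.
have T0 : 0 <= T by lra.
have DT0 : 0 <= D * (2 * T) by rewrite mulr_ge0 //; lra.
have step : 2 * (D * (2 * T)) `^ a + 4 * T <= (T ^+ 2 / 4) `^ a.
  have T4_ge1 : 1 <= 4 * T by lra.
  have := powR_superadditive a1 DT0 DT0.
  have := powR_superadditive a1 (addr_ge0 DT0 DT0) (le_trans ler01 T4_ge1).
  have := le1r_powR T4_ge1 (ltW a1).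
  have : (D * (2 * T) + D * (2 * T) + 4 * T) `^ a <= (T ^+ 2 / 4) `^ a.
    by apply: ge0_ler_powR; rewrite ?nnegrE; try lra; nra.
  lra.
have mr : 1 <= m%:R :> R by rewrite ler1n.
have m2 : 0 <= m%:R / 2 :> R by lra.
have m1T : 0 <= (m%:R - 1) * T by rewrite mulr_ge0 // subr_ge0.
have := ler_wpM2l m2 step.
have -> : m.+1%:R = m%:R + 1 :> R by rewrite natr1.
lra.
Qed.

Section no_shortcut.
Variables (R : realType) (d n : nat) (alpha T rho : R) (om : config R d).
Variable Y : nat -> pt R d -> pt R d.
Hypotheses (alpha_gt1 : 1 < alpha) (snapY : snap_map om T Y).
Hypothesis T_large : 16 * (2 * d%:R + 1) <= T.
Hypothesis rho_ge0 : 0 <= rho.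
Hypothesis rho_large : 4 * doubling_const alpha * (2 * d%:R + 1) <= rho ^+ 2 * T.
Hypothesis rho_small : forall j, (2 ^ j <= n)%N -> j%:R * rho <= 1 / 2.
Variables (g : nat -> pt R d) (s : nat).
Hypothesis s_in : (1 <= s <= n)%N.
Hypothesis no_shortcut : ~ exists g' k, (0 < k)%N /\ rerouted n om g g' s k /\
  Tn n alpha g' + k.+1%:R * T <= Tn n alpha g.

Let alpha_ge0 : 0 <= alpha. Proof. exact: ltW (lt_trans ltr01 alpha_gt1). Qed.
Let T_ge1 : 1 <= T. Proof. by have := T_large; have : 0 <= d%:R :> R by []; lra. Qed.
Let T_ge0 : 0 <= T. Proof. exact: le_trans ler01 T_ge1. Qed.
Let s_ge1 : (1 <= s)%N. Proof. by case/andP: s_in. Qed.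
Let tail_gt0 : (0 < n.+1 - s)%N. Proof. by case/andP: s_in => _ sn; rewrite subn_gt0. Qed.

Lemma window_no_gain K : (2 <= K <= n.+1 - s)%N ->
  pow_sum alpha (steps n g s) K <
  K%:R * (avg (steps n g s) K + (2 * d%:R + 1) * T) `^ alpha.
Proof.
move=> /andP[K2 Km]; rewrite ltNge; apply/negP => no_gain; apply: no_shortcut.
have sK : (s + K <= n.+1)%N by rewrite -leq_subRL // ltnW // ltnS; case/andP: s_in.
have [g' [rer cost]] := window_reroute alpha_ge0 T_ge0 snapY g s_ge1 K2 sK.
exists g', K.-1; split; first by rewrite ltn_predRL.
split => //; rewrite prednK; last exact: ltnW.
set x := avg (steps n g s) K + d%:R * (2 * T).
have x0 : 0 <= x by rewrite addr_ge0 ?avg_ge0 ?mulr_ge0 // => t; exact: steps_ge0.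
have sup : x `^ alpha + T <= (x + T) `^ alpha.
  apply: le_trans (powR_superadditive alpha_gt1 x0 T_ge0); rewrite lerD2l.
  exact: le1r_powR T_ge1 (ltW alpha_gt1).
have := ler_wpM2l (ler0n R K) sup.
rewrite (_ : x + T = avg (steps n g s) K + (2 * d%:R + 1) * T) in no_gain *; last first.
  by rewrite /x; ring.
lra.
Qed.

Lemma tail_no_gain :
  pow_sum alpha (steps n g s) (n.+1 - s) <
  (n.+1 - s)%:R * (d%:R * (2 * T)) `^ alpha + (n.+1 - s).+1%:R * T.
Proof.
rewrite ltNge; apply/negP => no_gain; apply: no_shortcut.
have [g' [rer cost]] := tail_reroute alpha_ge0 T_ge0 snapY g s_in.
exists g', (n.+1 - s)%N; split; first exact: tail_gt0.
by split => //; lra.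
Qed.

Lemma steps_le_of_no_shortcut : Num.max (Delta n g s) (Delta n g s.+1) <= T ^+ 2.
Proof.
rewrite leNgt; apply/negP => long_step.
have T1 := T_ge1; have TL := T_large; have d0 : 0 <= d%:R :> R by [].
have eps0 : 0 < (2 * d%:R + 1) * T by rewrite mulr_gt0 //; lra.
have eps_small : 4 * ((2 * d%:R + 1) * T) <= T ^+ 2 / 4 by nra.
have rho_large' : doubling_const alpha * ((2 * d%:R + 1) * T) <= rho ^+ 2 * (T ^+ 2 / 4).
  by have := rho_large; nra.
have rho_small' j : (2 ^ j <= n.+1 - s)%N -> j%:R * rho <= 1 / 2.
  by move=> hj; apply: rho_small; apply: leq_trans hj _; rewrite leq_subLR -add1n leq_add2r.
have head : T ^+ 2 < steps n g s 0 \/ (1 < n.+1 - s)%N /\ T ^+ 2 < steps n g s 1.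
  move: long_step; rewrite /steps addn0 addn1 lt_max => /orP[|long1]; first by left.
  right; split => //; have [|sn] := ltnP s n; first by rewrite ltn_subRL addn1 ltnS.
  by move: long1; rewrite Delta_out ?ltnS //; have := sqr_ge0 T; lra.
have := pow_sum_ge_of_large_head alpha_gt1 (steps_ge0 n g s) eps0 rho_ge0 eps_small
  rho_large' rho_small' window_no_gain head tail_gt0.
have := tail_no_gain; have := tail_cost_le alpha_gt1 (ler0n R d) T_large tail_gt0.
lra.
Qed.

End no_shortcut.

(** * Choice of the scales *)

Lemma powR_sqr_half (R : realType) (x p : R) : 0 <= x -> x `^ p = (x `^ (p / 2)) ^+ 2.
Proof.
move=> x0; rewrite -powR_mulrn ?powR_ge0 // -powRrM.
by congr (_ `^ _); field.
Qed.

Lemma exp2_powR_gt (R : realType) (lam : R) (j : nat) : 0 < lam ->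
  j%:R * (lam * ln 2) < (2 ^ j)%:R `^ lam.
Proof.
move=> lam0; rewrite natrX -powR_mulrn // -powRrM /powR pnatr_eq0 /=.
by apply: lt_le_trans (expR_ge1Dx _); rewrite mulrA addrC ltrDl.
Qed.

Section eventually.
Local Open Scope classical_set_scope.

Lemma eventually_le_powR_nat (R : realType) (lam X : R) : 0 < lam ->
  \forall n \near \oo, X <= n%:R `^ lam.
Proof.
move=> lam0; have [N _ HN] := nbhs_infty_ger (Num.max X 1 `^ lam^-1).
exists N => // n /HN Nn; have max0 : 0 <= Num.max X 1 by rewrite le_max ler01 orbT.
have Xmax : X <= Num.max X 1 by rewrite le_max lexx.
apply: le_trans Xmax _.
have -> : Num.max X 1 = (Num.max X 1 `^ lam^-1) `^ lam.
  by rewrite -powRrM mulVf ?gt_eqF // powRr1.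
by apply: ge0_ler_powR; rewrite ?nnegrE ?powR_ge0 // ltW.
Qed.

Lemma eventually_log2_le_powR_nat (R : realType) (lam M : R) : 0 < lam ->
  \forall n \near \oo, forall j, (2 ^ j <= n)%N -> j%:R * M <= n%:R `^ lam.
Proof.
move=> lam0; have lam2 : 0 < lam / 2 by rewrite divr_gt0.
set L := lam / 2 * ln 2; have L0 : 0 < L by rewrite mulr_gt0 ?ln_gt0 ?ltr1n.
have [N _ HN] := eventually_le_powR_nat (Num.max M 0 / L) lam2.
exists N => // n /HN bound j jn.
have n0 : 0 <= n%:R :> R := ler0n R n.
have jL : j%:R * L <= n%:R `^ (lam / 2).
  apply/ltW/(lt_le_trans (exp2_powR_gt j lam2)).
  by apply: ge0_ler_powR; rewrite ?nnegrE ?ler_nat ?ler0n // ltW ?divr_gt0.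
have -> : lam = lam / 2 + lam / 2 by field.
rewrite powRD; last by rewrite gt_eqF ?addr_gt0.
have jM : j%:R * M <= j%:R * Num.max M 0 by rewrite ler_wpM2l ?ler0n // le_max lexx.
apply: le_trans jM _.
have -> : j%:R * Num.max M 0 = j%:R * L * (Num.max M 0 / L) by field; rewrite gt_eqF.
apply: ler_pM => //; first by rewrite mulr_ge0 ?ler0n ?ltW.
by rewrite divr_ge0 ?le_max ?lexx ?orbT ?ltW.
Qed.

Lemma eventually_admissible_scales (R : realType) (d : nat) (alpha theta : R) :
  1 < alpha -> 0 < theta ->
  \forall n \near \oo, 16 * (2 * d%:R + 1) <= n%:R `^ theta /\
    exists rho, [/\ 0 <= rho,
      4 * doubling_const alpha * (2 * d%:R + 1) <= rho ^+ 2 * n%:R `^ theta &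
      forall j, (2 ^ j <= n)%N -> j%:R * rho <= 1 / 2].
Proof.
move=> alpha_gt1 theta0; have theta2 : 0 < theta / 2 by rewrite divr_gt0.
have C0 : 0 <= 4 * doubling_const alpha * (2 * d%:R + 1).
  by have := doubling_const_gt0 alpha_gt1; have : 0 <= d%:R :> R by []; nra.
pose K := 4 * doubling_const alpha * (2 * d%:R + 1) + 1.
near=> n; split; first by near: n; apply: eventually_le_powR_nat.
have log_small : forall j, (2 ^ j <= n)%N -> j%:R * (2 * K) <= n%:R `^ (theta / 2).
  by near: n; exact: eventually_log2_le_powR_nat theta2.
have n0 : (0 < n)%N by near: n; exact: nbhs_infty_gt.
set W := n%:R `^ (theta / 2) in log_small *.
have W0 : 0 < W by rewrite powR_gt0 // ltr0n.
exists (K / W); split; first by rewrite divr_ge0 ?(ltW W0) // /K; lra.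
  rewrite [n%:R `^ theta]powR_sqr_half ?ler0n // -/W expr_div_n divfK ?expf_neq0 ?gt_eqF //.
  by rewrite /K; nra.
by move=> j /log_small jK; rewrite mulrA ler_pdivrMr //; lra.
Unshelve. all: by end_near.
Qed.

End eventually.

Theorem lemma1 (R : realType) (d : nat) (alpha : R) :
  (1 <= d)%N -> 1 < alpha ->
  forall zeta : R, 0 < zeta ->
  exists theta : R, 0 < theta /\
  exists N : nat, forall n : nat, (N < n)%N ->
  forall s : nat, (1 <= s <= n)%N ->
  forall (gamma : nat -> pt R d) (omega' : config R d),
    theta_property n theta omega' ->
    Num.max (Delta n gamma s) (Delta n gamma s.+1) <= (n%:R) `^ zeta
    \/
    exists (gamma' : nat -> pt R d) (k : nat), (0 < k)%N /\
      (forall i : nat, (1 <= i <= n)%N -> ~~ (s <= i <= s + k - 1)%N ->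
          gamma i = gamma' i) /\
      (forall i : nat, (1 <= i <= n)%N -> (s <= i <= s + k - 1)%N ->
          omega' i (gamma' i)) /\
      Tn n alpha gamma' + (k.+1)%:R * (n%:R) `^ theta <= Tn n alpha gamma.
Proof.
move=> _ alpha_gt1 zeta zeta0; have theta0 : 0 < zeta / 2 by rewrite divr_gt0.
exists (zeta / 2); split => //.
have [N _ HN] := eventually_admissible_scales d alpha_gt1 theta0.
exists N => n Nn s s_in gamma omega' theta_om.
have [T_large [rho [rho0 rho_large rho_small]]] := HN n (ltnW Nn).
have T1 : 1 <= n%:R `^ (zeta / 2).
  by apply: le_trans T_large; have : 0 <= d%:R :> R by []; lra.
have [Y snapY] := theta_property_snap theta_om T1.
rewrite [n%:R `^ zeta]powR_sqr_half ?ler0n //.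
have [[g' [k [k0 [[agree on_om] cost]]]]|no_shortcut] := pselect (exists g' k,
    (0 < k)%N /\ rerouted n omega' gamma g' s k /\
    Tn n alpha g' + k.+1%:R * n%:R `^ (zeta / 2) <= Tn n alpha gamma).
  by right; exists g', k.
left; exact: (steps_le_of_no_shortcut alpha_gt1 snapY T_large rho0 rho_large rho_small s_in).
Qed.
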